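(* Let $-1<n<1$, $\delta=n+1$, and let $m$ be a minimizer for $f_L(n)$ that is not constant. Then $$\max_\Omega m\ge 1-\delta-2\sqrt{\delta}\sqrt{1-\delta/2}.$$
   Context: $\Omega$ is the flat torus $\mathbb R^d/(L\mathbb Z)^d$, $d\ge2$. $F(m)=\frac14(m^2-1)^2$, $\mathcal F(m)=\frac12\int_\Omega|\nabla m|^2dx+\int_\Omega F(m)dx$ for $m\in H^1(\Omega)$, and $f_L(n)=\inf\{\mathcal F(m):m\in H^1(\Omega),\ L^{-d}\int_\Omega m\,dx=n\}$; a minimizer is an admissible $m$ attaining the infimum (minimizers are smooth). *)

From HB Require Import structures.
From mathcomp Require Import all_boot all_order all_algebra.
From mathcomp Require Import all_classical all_reals all_analysis.
Set Implicit Arguments. Unset Strict Implicit. Unset Printing Implicit Defensive.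
Import Order.TTheory GRing.Theory Num.Theory.
Import numFieldNormedType.Exports.
Local Open Scope classical_set_scope.
Local Open Scope ring_scope.

Definition Fpot {R : realType} (s : R) : R := (s ^+ 2 - 1) ^+ 2 / 4.

Definition evec {R : realType} {d : nat} (i : 'I_d) : 'rV[R]_d := delta_mx 0 i.

Fixpoint iter_int {R : realType} (L : R) (k : nat) (g : seq R -> R) : R :=
  match k with
  | 0 => g [::]
  | k'.+1 => Rintegral (@lebesgue_measure R) `[0, L]
               (fun t => iter_int L k' (fun s => g (t :: s)))
  end.

(* integral over the fundamental cell [0,L]^d of the torus (R/LZ)^d *)
Definition torus_int {R : realType} (d : nat) (L : R) (g : 'rV[R]_d -> R) : R :=
  iter_int L d (fun s => g (\row_(i < d) nth 0 s i)).

(* functions on the torus: L-periodic in every coordinate *)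
Definition periodic {R : realType} (d : nat) (L : R) (m : 'rV[R]_d -> R) :=
  forall (x : 'rV[R]_d) (i : 'I_d), m (x + L *: evec i) = m x.

Definition admissible {R : realType} (d : nat) (L : R) (m : 'rV[R]_d -> R) :=
  [/\ periodic L m,
      (forall x, differentiable m x) &
      (forall i : 'I_d, continuous (fun x => 'D_(evec i) m x))].

Definition grad_sq {R : realType} (d : nat) (m : 'rV[R]_d -> R) (x : 'rV[R]_d) : R :=
  \sum_(i < d) ('D_(evec i) m x) ^+ 2.

Definition energy {R : realType} (d : nat) (L : R) (m : 'rV[R]_d -> R) : R :=
  torus_int L (fun x => grad_sq m x / 2) + torus_int L (fun x => Fpot (m x)).

Definition mean {R : realType} (d : nat) (L : R) (m : 'rV[R]_d -> R) : R :=
  torus_int L m / L ^+ d.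

Definition minimizer {R : realType} (d : nat) (L n : R) (m : 'rV[R]_d -> R) :=
  [/\ admissible L m, mean L m = n &
      forall m' : 'rV[R]_d -> R, admissible L m' -> mean L m' = n ->
        energy L m <= energy L m'].

From Pilot Require Import Defs.
From HB Require Import structures.
From mathcomp Require Import all_boot all_order all_algebra.
From mathcomp Require Import all_classical all_reals all_analysis.
From mathcomp Require Import ring lra.
Set Implicit Arguments.
Unset Strict Implicit.
Unset Printing Implicit Defensive.
Import Order.TTheory GRing.Theory Num.Theory.
Import numFieldNormedType.Exports.
Local Open Scope classical_set_scope.
Local Open Scope ring_scope.

(* Let r := sqrt (2 - 2 n^2); as 4 delta - 2 delta^2 = 2 - 2 n^2, the claim is
   max m >= -n - r.  The double well lies above its tangent line at n outside
   (-n - r, -n + r):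
     F v - F n - F'(n) (v - n) = (v - n)^2 ((v + n)^2 - r^2) / 4.
   If m < -n - r everywhere, this gap is nonnegative along m and positive where
   m <> n.  Integrating over the torus, the linear term vanishes because m has
   mean n, so int F(m) > L^d F(n), the energy of the constant competitor n; this
   contradicts minimality since the Dirichlet term is nonnegative.
   Positivity of the iterated integral of a continuous, nonnegative, somewhere
   positive function uses uniform continuity on the cell [0, L]^d
   (Heine-Cantor) to make the partial integrals continuous. *)

Section IntervalIntegral.
Variable R : realType.
Notation mu := (@lebesgue_measure R).

Lemma le_Rintegral_subset (D J : set R) (h : R -> R) :
  measurable D -> measurable J -> J `<=` D ->
  mu.-integrable D (EFin \o h) -> (forall t, D t -> 0 <= h t) ->
  Rintegral mu J h <= Rintegral mu D h.
Proof.
move=> mD mJ JD hi h0.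
have mDJ : measurable (D `\` J) by exact: measurableD.
have dJ : [disjoint J & D `\` J] by apply/disj_setPS => x [Jx [_ nJx]].
have hi' : mu.-integrable (J `|` D `\` J) (EFin \o h) by rewrite setDUK.
rewrite -(setDUK JD) (@Rintegral_setU _ _ _ mu J (D `\` J) h mJ mDJ hi' dJ) lerDl.
by apply: Rintegral_ge0 => t [Dt _]; exact: h0.
Qed.

Lemma continuous_within_itv_lower_bound (a b t0 : R) (h : R -> R) :
  a < b -> {within `[a, b]%classic, continuous h} -> a <= t0 <= b -> 0 < h t0 ->
  exists a' b', [/\ a' < b', `[a', b']%classic `<=` `[a, b]%classic &
                    forall t, `[a', b']%classic t -> h t0 / 2 <= h t].
Proof.
move=> ab ch /andP[at0 t0b] ht0.
have c0 : 0 < h t0 / 2 by rewrite divr_gt0.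
have Dt0 : `[a, b]%classic t0 by rewrite /= in_itv /= at0 t0b.
move/subspace_continuousP: ch => /(_ t0 Dt0) /cvgrPdist_lt /(_ _ c0).
move=> /nbhs_ballP [dl /= dl0 Hdl].
have r0 : 0 < dl / 2 by rewrite divr_gt0.
have rdl : dl / 2 < dl by rewrite ltr_pdivrMr // ltr_pMr //; lra.
exists (Num.max a (t0 - dl / 2)), (Num.min b (t0 + dl / 2)); split.
- by rewrite gt_max !lt_min; apply/andP; split; apply/andP; split; lra.
- move=> t; rewrite /= !in_itv /= ge_max le_min.
  by move=> /andP[/andP[-> _] /andP[-> _]].
- move=> t; rewrite /= in_itv /= ge_max le_min.
  move=> /andP[/andP[a_t tr1] /andP[t_b tr2]].
  have Dt : `[a, b]%classic t by rewrite /= in_itv /= a_t t_b.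
  have bt : ball t0 dl t by rewrite /ball /= ltr_norml; apply/andP; split; lra.
  by move: (Hdl t bt Dt); rewrite ltr_norml /from_subspace /= => /andP[_]; lra.
Qed.

Lemma Rintegral_itv_gt0 (a b t0 : R) (h : R -> R) :
  a < b -> {within `[a, b]%classic, continuous h} ->
  (forall t, `[a, b]%classic t -> 0 <= h t) -> a <= t0 <= b -> 0 < h t0 ->
  0 < Rintegral mu `[a, b]%classic h.
Proof.
move=> ab ch h0 t0ab ht0.
have [a' [b' [ab' sub hJ]]] := continuous_within_itv_lower_bound ab ch t0ab ht0.
have hi : mu.-integrable `[a, b]%classic (EFin \o h).
  by apply: continuous_compact_integrable => //; exact: segment_compact.
have cJ : mu.-integrable `[a', b']%classic (EFin \o cst (h t0 / 2)).
  apply: continuous_compact_integrable; first exact: segment_compact.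
  by apply: continuous_subspaceT => x; exact: cst_continuous.
apply: lt_le_trans (le_Rintegral_subset _ _ sub hi h0) => //.
have hiJ : mu.-integrable `[a', b']%classic (EFin \o h).
  exact: integrableS hi.
apply: lt_le_trans (@le_Rintegral _ _ _ mu _ _ h _ cJ hiJ hJ) => //.
rewrite Rintegral_cst //.
have -> : fine (mu `[a', b']%classic) = b' - a'.
  by rewrite (lebesgue_measure_itv `[a', b']) /= lte_fin ab'.
by rewrite mulr_gt0 ?divr_gt0 ?subr_gt0.
Qed.

End IntervalIntegral.

Section IteratedIntegral.
Variables (R : realType) (L : R).
Hypothesis L_gt0 : 0 < L.
Notation mu := (@lebesgue_measure R).

Definition cell k (s : seq R) := (size s == k) && all (fun t => 0 <= t <= L) s.

Definition cell_unif_continuous k (g : seq R -> R) :=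
  forall e : R, 0 < e -> exists2 dl : R, 0 < dl &
    forall s s', cell k s -> cell k s' ->
      (forall i, (i < k)%N -> `|nth 0 s i - nth 0 s' i| < dl) -> `|g s - g s'| < e.

Lemma cell_cons k t s : cell k.+1 (t :: s) = (0 <= t <= L) && cell k s.
Proof. by rewrite /cell /= eqSS andbCA. Qed.

Lemma in_itv0L t : `[0, L]%classic t <-> 0 <= t <= L.
Proof. by rewrite /= in_itv. Qed.

Lemma cell_unif_continuous_cons k g t : 0 <= t <= L ->
  cell_unif_continuous k.+1 g -> cell_unif_continuous k (fun s => g (t :: s)).
Proof.
move=> ht ug e e0; have [dl dl0 H] := ug e e0; exists dl => // s s' cs cs' hs.
apply: H; rewrite ?cell_cons ?ht //.
by case=> [|i] /=; [rewrite subrr normr0 | exact: hs].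
Qed.

Lemma cell_unif_continuousB k g1 g2 :
  cell_unif_continuous k g1 -> cell_unif_continuous k g2 ->
  cell_unif_continuous k (fun s => g1 s - g2 s).
Proof.
move=> u1 u2 e e0; have e20 : 0 < e / 2 by rewrite divr_gt0.
have [d1 d10 H1] := u1 _ e20; have [d2 d20 H2] := u2 _ e20.
exists (Num.min d1 d2) => [|s s' cs cs' hs]; first by rewrite lt_min d10 d20.
have h1 : `|g1 s - g1 s'| < e / 2.
  by apply: H1 => // i /hs; rewrite lt_min => /andP[].
have h2 : `|g2 s - g2 s'| < e / 2.
  by apply: H2 => // i /hs; rewrite lt_min => /andP[].
rewrite (_ : _ - _ = (g1 s - g1 s') - (g2 s - g2 s')); last by ring.
by apply: le_lt_trans (ler_normB _ _) _; rewrite (splitr e) ltrD.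
Qed.

Lemma cell_unif_continuous_cst k c : cell_unif_continuous k (fun _ => c).
Proof. by move=> e e0; exists 1 => // *; rewrite subrr normr0. Qed.

Lemma cell_unif_continuousZ k c g :
  cell_unif_continuous k g -> cell_unif_continuous k (fun s => c * g s).
Proof.
move=> ug e e0; have e1 : 0 < e / (`|c| + 1) by rewrite divr_gt0 // ltr_pwDr.
have [dl dl0 H] := ug _ e1; exists dl => // s s' cs cs' hs.
rewrite -mulrBr normrM.
have := H s s' cs cs' hs; rewrite ltr_pdivlMr ?ltr_pwDr // => h.
by apply: le_lt_trans h; rewrite mulrDr mulr1 ler_wpDr // mulrC.
Qed.

Lemma iter_int_ge0 k g : (forall s, cell k s -> 0 <= g s) -> 0 <= iter_int L k g.
Proof.
elim: k g => [|k IH] g hg /=; first exact: hg.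
apply: Rintegral_ge0 => t /in_itv0L ht; apply: IH => s cs; apply: hg.
by rewrite cell_cons ht.
Qed.

Lemma iter_int_cst k c : iter_int L k (fun _ => c) = c * L ^+ k.
Proof.
elim: k c => [|k IH] c /=; first by rewrite expr0 mulr1.
under eq_Rintegral do rewrite IH.
rewrite Rintegral_cst //.
have -> : fine (mu `[0, L]%classic) = L.
  by rewrite (lebesgue_measure_itv `[0, L]) /= lte_fin L_gt0 /= subr0.
by rewrite exprS; ring.
Qed.

(* Linearity at level k makes the partial integrals at level k + 1 continuous,
   which in turn gives linearity at level k + 1. *)
Definition iter_intB_law k := forall g1 g2,
  cell_unif_continuous k g1 -> cell_unif_continuous k g2 ->
  iter_int L k (fun s => g1 s - g2 s) = iter_int L k g1 - iter_int L k g2.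

Lemma iter_int_norm_le k f c : iter_intB_law k ->
  cell_unif_continuous k f -> (forall s, cell k s -> `|f s| <= c) ->
  `|iter_int L k f| <= c * L ^+ k.
Proof.
move=> intB uf hf.
have h1 : 0 <= iter_int L k (fun s => c - f s).
  apply: iter_int_ge0 => s cs; rewrite subr_ge0.
  exact: le_trans (ler_norm _) (hf s cs).
have h2 : 0 <= iter_int L k (fun s => c - (0 - f s)).
  apply: iter_int_ge0 => s cs; rewrite sub0r opprK.
  by have := hf s cs; rewrite ler_norml; lra.
have u0f := cell_unif_continuousB (cell_unif_continuous_cst k 0) uf.
have uc := cell_unif_continuous_cst k.
rewrite intB ?iter_int_cst in h1; [|exact: uc|exact: uf].
rewrite intB ?iter_int_cst in h2; [|exact: uc|exact: u0f].
rewrite intB ?iter_int_cst ?mul0r in h2; [|exact: uc|exact: uf].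
by rewrite ler_norml; apply/andP; split; lra.
Qed.

Lemma iter_int_cons_continuous k g : iter_intB_law k ->
  cell_unif_continuous k.+1 g ->
  {within `[0, L]%classic, continuous (fun t => iter_int L k (fun s => g (t :: s)))}.
Proof.
move=> intB ug; apply/subspace_continuousP => x /in_itv0L Dx.
apply/cvgrPdist_lt => e e0.
have Lk : 0 < L ^+ k + 1 by rewrite ltr_pwDr // exprn_ge0 // ltW.
have e1 : 0 < e / (L ^+ k + 1) by rewrite divr_gt0.
have [dl dl0 H] := ug _ e1.
apply/nbhs_ballP; exists dl => //= t bt /in_itv0L Dt.
have ux := cell_unif_continuous_cons Dx ug.
have ut := cell_unif_continuous_cons Dt ug.
rewrite -intB //.
apply: le_lt_trans (@iter_int_norm_le k _ (e / (L ^+ k + 1)) intB _ _) _.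
- exact: cell_unif_continuousB.
- move=> s cs; apply/ltW/H; rewrite ?cell_cons ?Dx ?Dt //.
  case=> [|i] hi /=; last by rewrite subrr normr0.
  by move: bt; rewrite /ball.
- by rewrite mulrAC ltr_pdivrMr // ltr_pM2l // ltrDl.
Qed.

Lemma iter_int_cons_integrable k g : iter_intB_law k ->
  cell_unif_continuous k.+1 g ->
  mu.-integrable `[0, L]%classic
    (EFin \o (fun t => iter_int L k (fun s => g (t :: s)))).
Proof.
move=> intB ug; apply: continuous_compact_integrable.
  exact: segment_compact.
exact: iter_int_cons_continuous.
Qed.

Lemma iter_intB k : iter_intB_law k.
Proof.
elim: k => [|k IH] g1 g2 u1 u2 //=.
rewrite -RintegralB //; [|exact: iter_int_cons_integrable..].
apply: eq_Rintegral => t; rewrite inE => /in_itv0L Dt.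
by rewrite IH //; apply: cell_unif_continuous_cons.
Qed.

Lemma iter_intZ k c g : cell_unif_continuous k g ->
  iter_int L k (fun s => c * g s) = c * iter_int L k g.
Proof.
elim: k g => [|k IH] g ug //=.
rewrite -RintegralZl //; last exact/iter_int_cons_integrable/ug/iter_intB.
apply: eq_Rintegral => t; rewrite inE => /in_itv0L Dt.
by rewrite IH //; apply: cell_unif_continuous_cons.
Qed.

Lemma iter_int_affine k a b c g1 g2 :
  cell_unif_continuous k g1 -> cell_unif_continuous k g2 ->
  iter_int L k (fun s => a * g1 s + b * g2 s + c) =
  a * iter_int L k g1 + b * iter_int L k g2 + c * L ^+ k.
Proof.
move=> u1 u2.
have u1a := cell_unif_continuousZ a u1.
have u2b := cell_unif_continuousZ (- b) u2.
have u2bc := cell_unif_continuousB u2b (cell_unif_continuous_cst k c).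
have -> : (fun s => a * g1 s + b * g2 s + c) =
          (fun s => a * g1 s - ((- b) * g2 s - c)) by apply: funext => s; ring.
rewrite (iter_intB u1a u2bc) (iter_intB u2b (cell_unif_continuous_cst k c)).
by rewrite !iter_intZ // iter_int_cst; ring.
Qed.

Lemma iter_int_gt0 k g s0 : cell_unif_continuous k g ->
  (forall s, cell k s -> 0 <= g s) -> cell k s0 -> 0 < g s0 ->
  0 < iter_int L k g.
Proof.
elim: k g s0 => [|k IH] g s0 ug g0 cs0 gs0 /=.
  by case: s0 cs0 gs0.
case: s0 cs0 gs0 => [|t0 s0] //; rewrite cell_cons => /andP[ht0 cs0] gs0.
apply: (Rintegral_itv_gt0 L_gt0 _ _ ht0).
- exact/iter_int_cons_continuous/ug/iter_intB.
- move=> t /in_itv0L Dt; apply: iter_int_ge0 => s cs; apply: g0.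
  by rewrite cell_cons Dt.
- apply: (IH _ s0) => //; first exact: cell_unif_continuous_cons.
  by move=> s cs; apply: g0; rewrite cell_cons ht0.
Qed.

End IteratedIntegral.

Lemma heine_cantor (R : realType) (T : pseudoMetricType R) (K : set T)
    (f : T -> R) :
  compact K -> continuous f -> forall e : R, 0 < e ->
  exists2 dl : R, 0 < dl & forall x y, K x -> ball x dl y -> `|f x - f y| < e.
Proof.
move=> cK cf e e0.
have e2 : 0 < e / 2 by rewrite divr_gt0.
pose P (dl : R) (x : T) := forall y, ball x dl y -> `|f x - f y| < e.
have near_cover : \forall dl \near (0 : R)^'+, K `<=` P dl.
  apply: (compact_near_coveringP K).1 => // x Kx.
  have [r /= r0 Hr] := (nbhs_ballP _ _).1 (@cvgr_dist_lt _ _ _ (nbhs x) _ f (f x) (cf x) _ e2).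
  have r2 : 0 < r / 2 by rewrite divr_gt0.
  exists (ball x (r / 2) : set T, (fun dl : R => 0 < dl < r / 2) : set R).
    split; first exact: nbhsx_ballx.
    near=> dl; apply/andP; split; near: dl; [exact: nbhs_right_gt|exact: nbhs_right_lt].
  case=> x' dl /= [bx' /andP[dl0 dlr]] y bx'y.
  have hx' : ball x r x' by apply: le_ball bx'; rewrite ler_pdivrMr // ler_peMr //; lra.
  have hy : ball x r y.
    by apply: le_ball (ball_triangle bx' bx'y); rewrite [leRHS](splitr r) lerD // ltW.
  have := Hr _ hx'; have := Hr _ hy.
  rewrite (_ : f x' - f y = (f x - f y) - (f x - f x')); last by ring.
  move=> h1 h2; apply: le_lt_trans (ler_normB _ _) _.
  by rewrite [e](splitr e) ltrD.
have [dl [dl0 Hdl]] : exists dl : R, 0 < dl /\ K `<=` P dl.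
  apply: (@filter_ex _ ((0 : R)^'+)); near=> dl; split; near: dl;
    [exact: nbhs_right_gt|exact: near_cover].
by exists dl => // x y /Hdl; apply.
Unshelve. all: by end_near.
Qed.

Section Periodic.
Variables (R : realType) (d : nat) (L : R) (m : 'rV[R]_d -> R).
Hypothesis m_periodic : Defs.periodic L m.

Lemma periodic_shiftn (k : nat) x i : m (x + (k%:R * L) *: evec i) = m x.
Proof.
elim: k x => [|k IH] x; first by rewrite mul0r scale0r addr0.
by rewrite -natr1 mulrDl mul1r scalerDl addrA m_periodic IH.
Qed.

Lemma periodic_shiftz (z : int) x i : m (x + (z%:~R * L) *: evec i) = m x.
Proof.
case: z => k; first by rewrite -pmulrn periodic_shiftn.
rewrite NegzE mulrNz mulNr scaleNr.
by rewrite -[in RHS](subrK ((k.+1%:R * L) *: evec i) x) periodic_shiftn.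
Qed.

Lemma periodic_cell_rep : 0 < L -> forall x, exists y,
  m y = m x /\ forall i, 0 <= y ord0 i <= L.
Proof.
move=> L_gt0 x.
suff /(_ d (leqnn d)) [y [my hy]] : forall p, (p <= d)%N -> exists y,
    m y = m x /\ forall i : 'I_d, (i < p)%N -> 0 <= y ord0 i <= L.
  by exists y; split => // i; exact: hy.
elim=> [|p IH] hp; first by exists x.
have [y [my hy]] := IH (ltnW hp).
pose i := Ordinal hp.
pose z := Num.floor (y ord0 i / L).
exists (y + ((- z)%:~R * L) *: evec i); split; first by rewrite periodic_shiftz.
move=> j; rewrite ltnS leq_eqVlt => /orP[/eqP ji|jp]; rewrite !mxE /=.
- have -> : j = i by apply: val_inj.
  rewrite eqxx mulr1 mulrNz mulNr.
  have /andP[h1 h2] := mem_rg1_floor (y ord0 i / L).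
  have h1' : z%:~R * L <= y ord0 i by rewrite -ler_pdivlMr.
  have h2' : y ord0 i < (z%:~R + 1) * L by rewrite -ltr_pdivrMr.
  by apply/andP; split; nra.
- have /ltn_eqF ji : (j < i)%N by [].
  by rewrite -val_eqE /= ji mulr0 addr0; exact: hy.
Qed.

End Periodic.

Section TorusIntegral.
Variables (R : realType) (d : nat) (L : R).
Hypothesis L_gt0 : 0 < L.

Lemma continuous_cell_unif_continuous (f : 'rV[R]_d -> R) : continuous f ->
  cell_unif_continuous L d (fun s => f (\row_(i < d) nth 0 s i)).
Proof.
move=> cf e e0.
pose K := [set v : 'rV[R]_d | forall i, `[0, L]%classic (v ord0 i)].
have cK : compact K := rV_compact (fun _ => @segment_compact R 0 L).
have [dl dl0 H] := heine_cantor cK cf e0; exists dl => // s s' cs cs' hs.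
apply: H.
- move=> i; rewrite mxE; move: cs => /andP[/eqP sz /all_nthP].
  by move=> /(_ 0 i); rewrite sz => /(_ (ltn_ord i)) h; rewrite /= in_itv.
- by split=> // i j; rewrite (ord1 i) !mxE; exact: hs.
Qed.

Lemma torus_int_ge0 (g : 'rV[R]_d -> R) : (forall x, 0 <= g x) ->
  0 <= torus_int L g.
Proof. by move=> g0; apply: iter_int_ge0. Qed.

Lemma torus_int_cst c : torus_int L (fun _ : 'rV[R]_d => c) = c * L ^+ d.
Proof. exact: iter_int_cst. Qed.

Lemma torus_int_affine a b c (f g : 'rV[R]_d -> R) :
  continuous f -> continuous g ->
  torus_int L (fun x => a * f x + b * g x + c) =
  a * torus_int L f + b * torus_int L g + c * L ^+ d.
Proof.
move=> cf cg.
exact: iter_int_affine (continuous_cell_unif_continuous cf) (continuous_cell_unif_continuous cg).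
Qed.

Lemma torus_int_gt0 (g : 'rV[R]_d -> R) x0 :
  continuous g -> Defs.periodic L g -> (forall x, 0 <= g x) -> 0 < g x0 ->
  0 < torus_int L g.
Proof.
move=> cg g_per g0 gx0.
have [y [gy y_cell]] := periodic_cell_rep g_per L_gt0 x0.
pose s0 := [seq y ord0 i | i <- enum 'I_d].
have gs0 : 0 < g (\row_(i < d) nth 0 s0 i).
  suff -> : \row_(i < d) nth 0 s0 i = y by rewrite gy.
  apply/rowP => i; rewrite mxE (nth_map i) ?size_enum_ord //.
  by rewrite nth_ord_enum (ord1 ord0).
apply: (iter_int_gt0 L_gt0 (continuous_cell_unif_continuous cg) _ _ gs0) => //.
rewrite /cell size_map size_enum_ord eqxx /=.
by apply/allP => t /mapP[i _ ->]; exact: y_cell.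
Qed.

End TorusIntegral.

Section ConstantCompetitor.
Variables (R : realType) (d : nat) (L : R).
Hypothesis L_gt0 : 0 < L.

Lemma admissible_cst (c : R) : admissible L (fun _ : 'rV[R]_d => c).
Proof.
split=> [//|x|i]; first exact: differentiable_cst.
under eq_fun do rewrite derive_cst.
exact: cst_continuous.
Qed.

Lemma mean_cst (c : R) : mean L (fun _ : 'rV[R]_d => c) = c.
Proof. by rewrite /mean /torus_int iter_int_cst // mulfK // expf_neq0 // gt_eqF. Qed.

Lemma energy_cst (c : R) : energy L (fun _ : 'rV[R]_d => c) = Fpot c * L ^+ d.
Proof.
have grad0 x : grad_sq (fun _ : 'rV[R]_d => c) x / 2 = 0.
  by rewrite /grad_sq big1 ?mul0r // => i _; rewrite derive_cst expr0n.
by rewrite /energy (eq_fun grad0) !torus_int_cst //; ring.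
Qed.

Lemma minimizer_Fpot_int_le (n : R) (m : 'rV[R]_d -> R) : minimizer L n m ->
  torus_int L (fun x => Fpot (m x)) <= Fpot n * L ^+ d.
Proof.
move=> [_ _ m_min].
have := m_min _ (admissible_cst n) (mean_cst n); rewrite energy_cst /energy.
have : 0 <= torus_int L (fun x => grad_sq m x / 2).
  apply: torus_int_ge0 => x; apply: divr_ge0 => //.
  by apply: sumr_ge0 => i _; exact: sqr_ge0.
lra.
Qed.

End ConstantCompetitor.

(* [n * (n ^+ 2 - 1)] is [F'(n)]. *)
Definition Fpot_gap {R : realType} (n v : R) : R :=
  Fpot v - (Fpot n + n * (n ^+ 2 - 1) * (v - n)).

Lemma Fpot_gapE (R : realType) (n v : R) :
  Fpot_gap n v = (v - n) ^+ 2 * ((v + n) ^+ 2 - (2 - 2 * n ^+ 2)) / 4.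
Proof. by rewrite /Fpot_gap /Fpot; field. Qed.

Lemma Fpot_continuous (R : realType) : continuous (@Fpot R).
Proof.
move=> s; apply: cvgM; last exact: cvg_cst.
by apply: cvgM; apply: cvgB; try exact: cvg_cst; apply: cvgM; exact: cvg_id.
Qed.

Lemma Fpot_gap_continuous (R : realType) (n : R) : continuous (Fpot_gap n).
Proof.
move=> v; apply: cvgB; first exact: Fpot_continuous.
apply: cvgD; first exact: cvg_cst.
by apply: cvgM; [exact: cvg_cst|apply: cvgB; [exact: cvg_id|exact: cvg_cst]].
Qed.

Lemma torus_int_Fpot_gap (R : realType) (d : nat) (L n : R)
    (m : 'rV[R]_d -> R) :
  0 < L -> continuous m -> mean L m = n ->
  torus_int L (fun x => Fpot_gap n (m x)) =
  torus_int L (fun x => Fpot (m x)) - Fpot n * L ^+ d.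
Proof.
move=> L_gt0 m_cont m_mean.
have Fm_cont : continuous (fun x => Fpot (m x)).
  by move=> x; apply: continuous_comp; [exact: m_cont|exact: Fpot_continuous].
have m_int : torus_int L m = n * L ^+ d.
  by rewrite -m_mean /mean divfK // expf_neq0 // gt_eqF.
pose B := n * (n ^+ 2 - 1).
have -> : (fun x => Fpot_gap n (m x)) =
          (fun x => 1 * Fpot (m x) + (- B) * m x + (B * n - Fpot n)).
  by apply: funext => x; rewrite /Fpot_gap /B; ring.
by rewrite torus_int_affine // m_int; ring.
Qed.

Theorem lemma3p2 (R : realType) (d : nat) (L n : R) (m : 'rV[R]_d -> R) :
  (2 <= d)%N -> 0 < L -> -1 < n < 1 ->
  minimizer L n m ->
  (exists x y, m x != m y) ->
  let delta := n + 1 in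
  exists x : 'rV[R]_d,
    1 - delta - 2 * Num.sqrt delta * Num.sqrt (1 - delta / 2) <= m x.
Proof.
move=> _ L_gt0 /andP[n_gt n_lt] m_min [x1 [y1 m_ncst]] delta.
have [[m_per m_diff _] m_mean _] := m_min.
have m_cont : continuous m := fun x => differentiable_continuous (m_diff x).
set r := 2 * _ * _.
have r_ge0 : 0 <= r by rewrite !mulr_ge0 ?sqrtr_ge0.
have r2 : r ^+ 2 = 2 - 2 * n ^+ 2.
  rewrite /r !exprMn !sqr_sqrtr /delta; first by field.
  - by rewrite subr_ge0 ler_pdivrMr //; lra.
  - lra.
apply: contrapT => /forallNP m_low.
have m_lt x : m x + n < - r.
  by move/negP: (m_low x); rewrite -ltNge /delta; lra.
have gap_ge0 x : 0 <= Fpot_gap n (m x).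
  rewrite Fpot_gapE -r2 divr_ge0 // mulr_ge0 ?sqr_ge0 // subr_ge0.
  by have := m_lt x; nra.
have [x0 mx0] : exists x0, m x0 != n.
  by case: (eqVneq (m x1) n) => [mx1|]; [exists y1; rewrite -mx1 eq_sym|exists x1].
have gap_gt0 : 0 < Fpot_gap n (m x0).
  rewrite Fpot_gapE -r2 divr_gt0 // mulr_gt0 //.
    by rewrite exprn_even_gt0 // subr_eq0.
  by rewrite subr_gt0; have := m_lt x0; nra.
have gap_cont : continuous (fun x => Fpot_gap n (m x)).
  by move=> x; apply: continuous_comp; [exact: m_cont|exact: Fpot_gap_continuous].
have gap_per : Defs.periodic L (fun x => Fpot_gap n (m x)).
  by move=> x i; rewrite m_per.
have := torus_int_gt0 L_gt0 gap_cont gap_per gap_ge0 gap_gt0.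
rewrite torus_int_Fpot_gap //.
by have := minimizer_Fpot_int_le L_gt0 m_min; lra.
Qed.
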